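(* Let $P=\{S_1,\ldots,S_n\}$ be a homothetic packing of $n\ge 6$ squares whose radii satisfy the weak generic condition. Suppose that $(n_1,\ldots,n_k)$ is a cycle in the graph $([n],E_x)$ such that, setting $n_0=n_k$ and $n_{k+1}=n_1$, for every $i\in[k]$ neither $x_{n_{i-1}}<x_{n_i}<x_{n_{i+1}}$ nor $x_{n_{i+1}}<x_{n_i}<x_{n_{i-1}}$ holds. Then $k=4$ and the squares $S_{n_1},S_{n_2},S_{n_3},S_{n_4}$ share a corner.
   Context: Let $S=\{(x,y): -1\le x,y\le 1\}$. A homothetic packing of $n$ squares is a set $P=\{S_1,\ldots,S_n\}$ with $S_i=r_iS+p_i$, $r_i>0$ (radii), $p_i=(x_i,y_i)\in\mathbb{R}^2$ (centres), such that distinct squares have disjoint interiors. Its contact graph is $G=([n],E)$ where $\{i,j\}\in E$ iff $i\ne j$ and $S_i\cap S_j\ne\emptyset$; $E_x$ is the set of pairs $\{i,j\}\in E$ with $r_i+r_j=|x_i-x_j|\ge|y_i-y_j|$. The radii satisfy the weak generic condition if the only function $\sigma:[n]\to\{-1,0,1\}$ with at least $4$ zeroes and $\sum_{i=1}^n\sigma_ir_i=0$ is the zero function. Four squares share a corner if they have a common point which is a corner of each of them. *)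

From mathcomp Require Import all_boot all_order all_algebra.
From mathcomp Require Import reals.
Set Implicit Arguments. Unset Strict Implicit. Unset Printing Implicit Defensive.
Import Order.TTheory GRing.Theory Num.Theory.
Local Open Scope ring_scope.

Section Squares.
Variables (R : realType) (n : nat).
Variables (r x y : 'I_n -> R).

(* S_i = r_i S + p_i, S = [-1,1]^2 : the closed square *)
Definition in_square (i : 'I_n) (q : R * R) : Prop :=
  `|q.1 - x i| <= r i /\ `|q.2 - y i| <= r i.

Definition in_square_int (i : 'I_n) (q : R * R) : Prop :=
  `|q.1 - x i| < r i /\ `|q.2 - y i| < r i.

Definition homothetic_packing : Prop :=
  (forall i, 0 < r i) /\
  (forall i j, i != j -> forall q, ~ (in_square_int i q /\ in_square_int j q)).

Definition contact (i j : 'I_n) : Prop :=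
  i != j /\ exists q, in_square i q /\ in_square j q.

Definition Ex_edge (i j : 'I_n) : Prop :=
  contact i j /\ r i + r j = `|x i - x j| /\ `|y i - y j| <= `|x i - x j|.

Definition weak_generic : Prop :=
  forall sigma : 'I_n -> int,
    (forall i, sigma i \in [:: (-1)%R; 0%R; 1%R]) ->
    (4 <= #|[set i | sigma i == 0%R]|)%N ->
    \sum_(i < n) (sigma i)%:~R * r i = 0 ->
    forall i, sigma i = 0%R.

Definition is_corner (i : 'I_n) (q : R * R) : Prop :=
  (q.1 = x i + r i \/ q.1 = x i - r i) /\ (q.2 = y i + r i \/ q.2 = y i - r i).

End Squares.

Definition Ex_cycle (R : realType) (n : nat) (r x y : 'I_n -> R)
    (k : nat) (c : 'I_k -> 'I_n) : Prop :=
  (3 <= k)%N /\ injective c /\ forall i : 'I_k, Ex_edge r x y (c i) (c (ordS i)).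

(* The non-monotonicity makes the cycle zigzag in the x-direction, so all its
   squares touch one vertical line, alternately from the left and from the right.
   Their y-projections form a cyclic sequence of intervals, colored by side, in
   which consecutive intervals meet and intervals of one color have disjoint
   interiors; in particular k is even.  The cycle crosses every level twice, which
   forces the intervals of each color to leave no gap.  Hence, if g is the least
   upper end and G the greatest lower end, each color has one interval ending at
   g, one starting at G, and the others tile [g, G].  For k >= 6 the two tilings
   give disjoint sets of squares of equal total radius missing the four extreme
   squares, against the weak generic condition.  For k = 4 the four intervals
   share an endpoint p, and p on the vertical line is the common corner. *)

From mathcomp Require Import all_boot all_order all_algebra reals.
From mathcomp Require Import lra zify.
Set Implicit Arguments. Unset Strict Implicit. Unset Printing Implicit Defensive.
Import Order.TTheory GRing.Theory Num.Theory.
Local Open Scope ring_scope.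

Lemma exists_switch (f : nat -> bool) a d :
  f a -> ~~ f (a + d)%N -> exists2 m, (a <= m < a + d)%N & f m && ~~ f m.+1.
Proof.
elim: d => [|d IH] fa nfd; first by rewrite addn0 fa in nfd.
case fd: (f (a + d)%N).
  by exists (a + d)%N; rewrite ?fd -?addnS //; apply/andP; split; lia.
by have [m /andP[am md] sw] := IH fa (negbT fd); exists m => //; apply/andP; split; lia.
Qed.

Lemma neq_modn_of_lt k u v : (u < v < u + k)%N -> (u %% k != v %% k)%N.
Proof.
case/andP=> uv vuk; apply/negP => /eqP uv_mod.
have /dvdn_leq : (k %| v - u)%N by rewrite -eqn_mod_dvd 1?uv_mod //; lia.
lia.
Qed.

Lemma ord_cyclic_window k (u z : 'I_k) :
  u != z -> exists2 z' : nat, (u < z' < u + k)%N & (z' %% k)%N = z.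
Proof.
have z_lt := ltn_ord z; have u_lt := ltn_ord u.
case: (ltngtP u z) => [uz|zu|/val_inj ->]; last by rewrite eqxx.
  by exists z; rewrite ?modn_small //; apply/andP; split; lia.
by exists (z + k)%N; rewrite ?modnDr ?modn_small //; apply/andP; split; lia.
Qed.

Lemma sum_eq_of_matching (I : finType) (V : nmodType) (A B : {set I}) (F G : I -> V) :
  #|A| = #|B| -> {in A &, injective F} ->
  (forall i, i \in A -> exists2 j, j \in B & G j = F i) ->
  \sum_(i in A) F i = \sum_(j in B) G j.
Proof.
move=> cardAB injF matchAB.
pose p i := odflt i [pick j in B | G j == F i].
have pP i : i \in A -> p i \in B /\ G (p i) = F i.
  move=> iA; rewrite /p; case: pickP => [j /andP[jB /eqP] //|none] /=.
  by have [j jB Gj] := matchAB i iA; have := none j; rewrite jB Gj eqxx.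
have inj_p : {in A &, injective p}.
  by move=> i i' iA i'A pii'; apply: injF => //; rewrite -(pP i iA).2 -(pP i' i'A).2 pii'.
have pAB : p @: A = B.
  apply/eqP; rewrite eqEcard card_in_imset // cardAB leqnn andbT.
  by apply/subsetP => _ /imsetP[i iA ->]; exact: (pP i iA).1.
by rewrite -pAB big_imset //; apply: eq_bigr => i iA; rewrite (pP i iA).2.
Qed.

(* [lo m, hi m] models the y-projection of the (m mod k)-th square of the cycle
   and [t m] the side of the common vertical line on which that square lies. *)
Record interval_cycle (R : realDomainType) (k : nat) (lo hi : nat -> R)
    (t : nat -> bool) : Prop := IntervalCycle {
  ic_k_gt2 : (2 < k)%N;
  ic_lo_mod : forall m, lo (m %% k)%N = lo m;
  ic_hi_mod : forall m, hi (m %% k)%N = hi m;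
  ic_t_mod : forall m, t (m %% k)%N = t m;
  ic_lo_lt_hi : forall m, lo m < hi m;
  ic_tS : forall m, t m.+1 = ~~ t m;
  ic_lo_le_hiS : forall m, lo m <= hi m.+1;
  ic_loS_le_hi : forall m, lo m.+1 <= hi m;
  ic_disjoint : forall m m', t m = t m' -> (m %% k != m' %% k)%N ->
    hi m <= lo m' \/ hi m' <= lo m }.

Lemma interval_cycle_mirror (R : realDomainType) k (lo hi : nat -> R) t :
  interval_cycle k lo hi t -> interval_cycle k (fun m => - hi m) (fun m => - lo m) t.
Proof.
case=> k2 lo_mod hi_mod t_mod lt tS le1 le2 disj; split => //.
- by move=> m; rewrite hi_mod.
- by move=> m; rewrite lo_mod.
- by move=> m; rewrite ltrN2.
- by move=> m; rewrite lerN2.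
- by move=> m; rewrite lerN2.
- by move=> m m' tm km; rewrite !lerN2; case: (disj m m' tm km); [right|left].
Qed.

Section IntervalCycle.
Variables (R : realDomainType) (k : nat) (lo hi : nat -> R) (t : nat -> bool).
Hypothesis IC : interval_cycle k lo hi t.

Let k_gt0 : (0 < k)%N. Proof. by have := ic_k_gt2 IC; lia. Qed.
Let rep m : 'I_k := Ordinal (ltn_pmod m k_gt0).
Let lo_rep m : lo (rep m) = lo m. Proof. exact: (ic_lo_mod IC). Qed.
Let hi_rep m : hi (rep m) = hi m. Proof. exact: (ic_hi_mod IC). Qed.
Let t_rep m : t (rep m) = t m. Proof. exact: (ic_t_mod IC). Qed.

Lemma t_addn m d : t (m + d)%N = t m (+) odd d.
Proof.
elim: d => [|d IH]; first by rewrite addn0 addbF.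
by rewrite addnS (ic_tS IC) IH /= addbN.
Qed.

Lemma interval_cycle_even : ~~ odd k.
Proof.
have := t_addn 0 k; rewrite add0n -(ic_t_mod IC k) modnn.
by case: (t 0%N); case: (odd k).
Qed.

Lemma same_color_disjoint (i j : 'I_k) : t i = t j -> i != j ->
  hi i <= lo j \/ hi j <= lo i.
Proof. by move=> tij ij; apply: (ic_disjoint IC) => //; rewrite !modn_small. Qed.

Lemma same_color_lo_inj (i j : 'I_k) : t i = t j -> lo i = lo j -> i = j.
Proof.
move=> tij loij; apply/eqP/negPn/negP => /(same_color_disjoint tij).
by have := ic_lo_lt_hi IC i; have := ic_lo_lt_hi IC j; case; lra.
Qed.

Lemma up_crossing_spans_gap tau a b m : a < b ->
  (forall m, t m = tau -> hi m <= a \/ b <= lo m) -> hi m < b -> b <= hi m.+1 ->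
  t m.+1 = ~~ tau /\ lo m.+1 <= a.
Proof.
move=> ab gap hm hm1; have := ic_loS_le_hi IC m; have := ic_lo_lt_hi IC m.
have [tm|ntm] := eqVneq (t m) tau.
  by rewrite (ic_tS IC) tm; case: (gap _ tm) => ? ? ?; split => //; lra.
have tm1 : t m.+1 = tau by rewrite (ic_tS IC); apply/addbP; rewrite -negb_eqb.
by have := ic_lo_lt_hi IC m.+1; case: (gap _ tm1); lra.
Qed.

Lemma down_crossing_spans_gap tau a b m : a < b ->
  (forall m, t m = tau -> hi m <= a \/ b <= lo m) -> b <= hi m -> hi m.+1 < b ->
  t m = ~~ tau /\ lo m <= a.
Proof.
move=> ab gap hm hm1; have := ic_lo_le_hiS IC m; have := ic_lo_lt_hi IC m.+1.
have [tm1|ntm1] := eqVneq (t m.+1) tau.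
  have tm : t m = ~~ tau by rewrite -tm1 (ic_tS IC) negbK.
  by case: (gap _ tm1) => ? ? ?; split => //; lra.
have tm : t m = tau by move: ntm1; rewrite (ic_tS IC) negb_eqb => /addbP; rewrite negbK.
by have := ic_lo_lt_hi IC m; case: (gap _ tm); lra.
Qed.

(* Going round the cycle from [u] (below the gap) to [z] (above it) and back,
   level [b] is crossed upwards and downwards; each crossing yields an interval
   of the other color spanning [a, b], and these two intervals overlap. *)
Lemma no_gap tau a b (u z : 'I_k) :
  a < b -> t u = tau -> hi u <= a -> t z = tau -> b <= lo z ->
  ~ (forall i : 'I_k, t i = tau -> hi i <= a \/ b <= lo i).
Proof.
move=> ab tu hu tz lz gap.
have gapn m : t m = tau -> hi m <= a \/ b <= lo m.
  by rewrite -t_rep -hi_rep -lo_rep; exact: gap.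
have uz : u != z.
  by apply: contraTneq ab => uz; move: hu; rewrite uz -leNgt; have := ic_lo_lt_hi IC z; lra.
have [z' /andP[uz' z'uk] z'z] := ord_cyclic_window uz.
have tz' : t z' = tau by rewrite -(ic_t_mod IC) z'z.
have above_z' : ~~ (hi z' < b).
  by rewrite -(ic_hi_mod IC) z'z -leNgt; have := ic_lo_lt_hi IC z; lra.
have below_uk : hi (u + k)%N < b by rewrite -(ic_hi_mod IC) modnDr (ic_hi_mod IC); lra.
have below_u : hi u < b by lra.
have [m1 /andP[um1 m1z] /andP[hm1 hm1S]] :=
  exists_switch (f := fun m => hi m < b) (d := z' - u) below_u
    ltac:(by rewrite subnKC // ltnW).
have [m2 /andP[z'm2 m2uk] /andP[hm2 hm2S]] :=
  exists_switch (f := fun m => ~~ (hi m < b)) (d := u + k - z') above_z'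
    ltac:(by rewrite subnKC ?negbK // ltnW).
rewrite -leNgt in hm1S; rewrite -leNgt in hm2; rewrite negbK in hm2S.
have [tj1 lj1] := up_crossing_spans_gap ab gapn hm1 hm1S.
have [tj2 lj2] := down_crossing_spans_gap ab gapn hm2 hm2S.
rewrite subnKC ?(ltnW uz') // in m1z; rewrite subnKC ?(ltnW z'uk) // in m2uk.
have j12 : (m1.+1 < m2)%N.
  rewrite ltn_neqAle (leq_trans m1z z'm2) andbT.
  apply/eqP => e; move: tz'.
  have -> : z' = m1.+1 by apply/eqP; rewrite eqn_leq m1z e z'm2.
  by rewrite tj1; case: (tau).
have j2k : (m2 < m1.+1 + k)%N by apply: (leq_trans m2uk); rewrite leq_add2r leqW.
have := ic_disjoint IC (etrans tj1 (esym tj2)) (neq_modn_of_lt (introT andP (conj j12 j2k))).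
by case; lra.
Qed.

Lemma abutting_below tau (u s : 'I_k) :
  t u = tau -> t s = tau -> hi u <= lo s -> exists2 s' : 'I_k, t s' = tau & hi s' = lo s.
Proof.
move=> tu ts hus.
pose P (i : 'I_k) := (t i == tau) && (hi i <= lo s).
have Pu : P u by rewrite /P tu eqxx hus.
case: (arg_maxP (fun i : 'I_k => hi i) Pu) => s' /andP[/eqP ts' hs'] s'max.
exists s' => //; apply/eqP; rewrite eq_le hs' /= leNgt; apply/negP => hs's.
apply: (no_gap hs's ts' (lexx _) ts (lexx _)) => i ti.
have [his|sih] := lerP (hi i) (lo s).
  by left; apply: s'max; rewrite /P ti eqxx his.
right; have [-> //|ne] := eqVneq i s.
have := ic_lo_lt_hi IC s.
by case: (same_color_disjoint (etrans ti (esym ts)) ne) => h; lra.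
Qed.

Lemma hi_local_min m :
  hi m.+1 <= hi m -> hi m.+1 <= hi m.+2 -> hi m = hi m.+1 \/ hi m.+2 = hi m.+1.
Proof.
have km : (m %% k != m.+2 %% k)%N.
  by apply: neq_modn_of_lt; have := ic_k_gt2 IC; lia.
have tm2 : t m = t m.+2 by rewrite -addn2 t_addn addbF.
have := ic_loS_le_hi IC m.+1; have := ic_lo_le_hiS IC m.
by case: (ic_disjoint IC tm2 km) => ? ? ? ? ?; [left|right]; lra.
Qed.

Lemma min_hi_both_colors (a : 'I_k) : (forall i : 'I_k, hi a <= hi i) ->
  forall tau, exists2 i : 'I_k, t i = tau & hi i = hi a.
Proof.
move=> amin tau; have [<-|ta] := eqVneq (t a) tau; first by exists a.
have aminn m : hi a <= hi m by have := amin (rep m); rewrite hi_rep.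
pose m := (a + k.-1)%N.
have em : m.+1 = (a + k)%N by rewrite /m -addnS prednK.
have hm1 : hi m.+1 = hi a by rewrite em -(ic_hi_mod IC) modnDr (ic_hi_mod IC).
have tm1 : t m.+1 = t a by rewrite em -(ic_t_mod IC) modnDr (ic_t_mod IC).
have tm : t m = tau.
  by move: ta (ic_tS IC m); rewrite tm1; case: (t a); case: (t m); case: (tau).
have tm2 : t m.+2 = tau by rewrite (ic_tS IC) tm1; move: ta; case: (t a); case: (tau).
have [e|e] := hi_local_min (m := m) ltac:(by rewrite hm1) ltac:(by rewrite hm1).
  by exists (rep m); rewrite ?t_rep ?hi_rep // e.
by exists (rep m.+2); rewrite ?t_rep ?hi_rep // e.
Qed.

Lemma min_hi_lt_max_lo (a b : 'I_k) : (4 < k)%N ->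
  (forall i : 'I_k, hi a <= hi i) -> (forall i : 'I_k, lo i <= lo b) -> hi a < lo b.
Proof.
move=> k4 amin bmax.
have disj m d : (0 < d < k)%N -> ~~ odd d -> hi m <= lo (m + d)%N \/ hi (m + d)%N <= lo m.
  move=> /andP[d0 dk] ev; apply: (ic_disjoint IC).
    by rewrite t_addn (negbTE ev) addbF.
  by apply: neq_modn_of_lt; rewrite -{1}(addn0 m) !ltn_add2l d0.
(* The intervals 0, 2 and 4 have one color and are distinct as k > 4. *)
have := disj 0%N 2%N ltac:(by rewrite /= (ltn_trans _ k4)) isT.
have := disj 0%N 4%N ltac:(by rewrite /= k4) isT.
have := disj 2%N 2%N ltac:(by rewrite /= (ltn_trans _ k4)) isT; rewrite !add0n /=.
move: (amin (rep 0)) (amin (rep 2)) (amin (rep 4)) (bmax (rep 0)) (bmax (rep 2)) (bmax (rep 4)).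
rewrite !hi_rep !lo_rep.
move: (ic_lo_lt_hi IC 0) (ic_lo_lt_hi IC 2) (ic_lo_lt_hi IC 4).
by move=> *; repeat match goal with H : _ \/ _ |- _ => case: H => ? end; lra.
Qed.

End IntervalCycle.

Lemma max_lo_both_colors (R : realDomainType) k (lo hi : nat -> R) t
    (IC : interval_cycle k lo hi t) (b : 'I_k) :
  (forall i : 'I_k, lo i <= lo b) -> forall tau, exists2 i : 'I_k, t i = tau & lo i = lo b.
Proof.
move=> bmax tau.
have [|i ti /oppr_inj] := min_hi_both_colors (interval_cycle_mirror IC) (a := b) _ tau.
  by move=> i; rewrite lerN2.
by exists i.
Qed.

Section ColorTiling.
Variables (R : realDomainType) (k : nat) (lo hi : nat -> R) (t : nat -> bool).
Hypothesis IC : interval_cycle k lo hi t.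

Lemma middle_intervals_sum tau (bot top : 'I_k) :
  (forall i : 'I_k, hi bot <= hi i) -> (forall i : 'I_k, lo i <= lo top) ->
  hi bot < lo top -> t bot = tau -> t top = tau ->
  \sum_(i in [set i : 'I_k | t i == tau] :\ bot :\ top) (hi i - lo i) = lo top - hi bot.
Proof.
move=> botmin topmax bot_top tbot ttop; set C := [set i : 'I_k | t i == tau].
have botC : bot \in C by rewrite inE tbot.
have topC : top \in C by rewrite inE ttop.
have lt i := ic_lo_lt_hi IC i.
have ne_bot_top : top != bot by apply: contraTneq bot_top => ->; have := lt bot; lra.
have lo_hi_match : \sum_(i in C :\ bot) lo i = \sum_(i in C :\ top) hi i.
  apply: sum_eq_of_matching.
  - move: (cardsD1 bot C) (cardsD1 top C); rewrite botC topC => -> /eqP.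
    by rewrite eqn_add2l => /eqP.
  - move=> i j; rewrite !inE => /andP[_ /eqP ti] /andP[_ /eqP tj].
    by apply: (same_color_lo_inj IC); rewrite ti tj.
  move=> s; rewrite !inE => /andP[sbot /eqP ts].
  have bot_s : hi bot <= lo s.
    rewrite eq_sym in sbot; have := botmin s; have := lt bot; have := lt s.
    by case: (same_color_disjoint IC (etrans tbot (esym ts)) sbot) => ? ? ? ?; lra.
  have [s' ts' hs'] := abutting_below IC tbot ts bot_s.
  exists s' => //; rewrite !inE ts' eqxx andbT.
  by apply: contraTneq bot_top => e; have := topmax s; have := lt top; rewrite -e; lra.
have top_Cbot : top \in C :\ bot by rewrite !inE ne_bot_top ttop eqxx.
have bot_Ctop : bot \in C :\ top by rewrite !inE eq_sym ne_bot_top tbot eqxx.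
have eC : C :\ top :\ bot = C :\ bot :\ top by rewrite !setDDl setUC.
rewrite (big_setD1 _ top_Cbot) (big_setD1 _ bot_Ctop) /= eC in lo_hi_match.
by rewrite sumrB; lra.
Qed.

Theorem interval_cycle_balanced : (4 < k)%N ->
  exists M1 M0 : {set 'I_k}, [/\ [disjoint M1 & M0], M1 != set0,
    (4 <= #|~: (M1 :|: M0)|)%N &
    \sum_(i in M1) (hi i - lo i) = \sum_(i in M0) (hi i - lo i)].
Proof.
move=> k4; have k0 : (0 < k)%N by apply: leq_trans k4.
pose i0 : 'I_k := Ordinal k0.
have [a _ amin] := arg_minP (i0 := i0) (P := xpredT) (fun i : 'I_k => hi i) isT.
have [b _ bmax] := arg_maxP (i0 := i0) (P := xpredT) (fun i : 'I_k => lo i) isT.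
have {}amin (i : 'I_k) : hi a <= hi i := amin i isT.
have {}bmax (i : 'I_k) : lo i <= lo b := bmax i isT.
have ab := min_hi_lt_max_lo IC k4 amin bmax.
have ends tau : exists bot top : 'I_k,
    [/\ t bot = tau, t top = tau, hi bot = hi a, lo top = lo b &
      \sum_(i in [set i : 'I_k | t i == tau] :\ bot :\ top) (hi i - lo i) = lo b - hi a].
  have [bot tbot hbot] := min_hi_both_colors IC amin tau.
  have [top ttop ltop] := max_lo_both_colors IC bmax tau.
  exists bot, top; split => //; rewrite -hbot -ltop.
  by apply: middle_intervals_sum => // [i|i|]; rewrite ?hbot ?ltop.
have [bot1 [top1 [tb1 tt1 hb1 lt1 sum1]]] := ends true.
have [bot0 [top0 [tb0 tt0 hb0 lt0 sum0]]] := ends false.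
exists ([set i : 'I_k | t i == true] :\ bot1 :\ top1),
       ([set i : 'I_k | t i == false] :\ bot0 :\ top0); split.
- rewrite disjoint_subset; apply/subsetP => i; rewrite !inE.
  by case/and3P => _ _ /eqP ->; rewrite !andbF.
- apply: contraTneq ab => M1_0.
  by rewrite -subr_gt0 -sum1 M1_0 big_set0 ltxx.
- have bot_top (u v : 'I_k) : hi u = hi a -> lo v = lo b -> u != v.
    move=> hu lv; apply: contraTneq ab => uv.
    by have := ic_lo_lt_hi IC v; rewrite -leNgt -hu -lv uv; lra.
  have uniq4 : uniq [:: bot0; bot1; top0; top1].
    have col (u v : 'I_k) : t u != t v -> u != v by apply: contraNneq => ->.
    rewrite /= !inE !negb_or (bot_top bot0 top0) // (bot_top bot0 top1) //.
    rewrite (bot_top bot1 top0) // (bot_top bot1 top1) //.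
    by rewrite (col bot0 bot1) ?tb0 ?tb1 // (col top0 top1) ?tt0 ?tt1.
  rewrite cardE; apply: (uniq_leq_size uniq4) => j; rewrite mem_enum !inE.
  by case/or4P => /eqP ->; rewrite ?tb0 ?tb1 ?tt0 ?tt1 ?eqxx /= ?andbF ?orbF.
- by rewrite sum1 sum0.
Qed.

End ColorTiling.

Lemma interval_cycle4_common_endpoint (R : realDomainType) (lo hi : nat -> R) t :
  interval_cycle 4 lo hi t -> exists p, forall m, (m < 4)%N -> hi m = p \/ lo m = p.
Proof.
move=> IC; have lt m := ic_lo_lt_hi IC m.
have le1 m := ic_lo_le_hiS IC m; have le2 m := ic_loS_le_hi IC m.
have lo4 : lo 4%N = lo 0%N by rewrite -(ic_lo_mod IC) modnn.
have hi4 : hi 4%N = hi 0%N by rewrite -(ic_hi_mod IC) modnn.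
have disj m : (m < 2)%N -> hi m <= lo m.+2 \/ hi m.+2 <= lo m.
  move=> m2; apply: (ic_disjoint IC); first by rewrite -addn2 (t_addn IC) addbF.
  by apply: neq_modn_of_lt; rewrite ltnS leqnSn /= -addn2 ltn_add2l.
have := le1 2%N; have := le2 3%N; have := le1 3%N; rewrite lo4 hi4.
move: (le1 0%N) (le2 0%N) (le1 1%N) (le2 1%N) (le2 2%N) => *.
case: (disj 0%N isT) => h02; [exists (hi 0%N) | exists (lo 0%N)].
all: case: (disj 1%N isT) => h13 [|[|[|[|//]]]] _; lra.
Qed.

Section Zigzag.
Variables (R : realDomainType) (X rad : nat -> R).
Hypothesis rad_gt0 : forall m, 0 < rad m.
Hypothesis step : forall m, rad m + rad m.+1 = `|X m - X m.+1|.
Hypothesis no_monotone :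
  forall m, ~ (X m < X m.+1 < X m.+2) /\ ~ (X m.+2 < X m.+1 < X m).

Definition rightward m := X m < X m.+1.

Definition contact_line m := if rightward m then X m + rad m else X m - rad m.

Lemma rightwardE m :
  X m.+1 = if rightward m then X m + (rad m + rad m.+1) else X m - (rad m + rad m.+1).
Proof.
by rewrite step /rightward; case: (ltrP (X m) (X m.+1)) => _; lra.
Qed.

Lemma rightwardS m : rightward m.+1 = ~~ rightward m.
Proof.
have [incr decr] := no_monotone m.
have := rad_gt0 m; have := rad_gt0 m.+1; have := rad_gt0 m.+2.
have := rightwardE m; have := rightwardE m.+1.
case: (rightward m); case: (rightward m.+1) => // e1 e0 *.
  by case: incr; apply/andP; split; lra.
by case: decr; apply/andP; split; lra.
Qed.

Lemma contact_lineS m : contact_line m.+1 = contact_line m.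
Proof. by rewrite /contact_line rightwardS (rightwardE m); case: (rightward m) => /=; lra. Qed.

Lemma contact_line_const m : contact_line m = contact_line 0.
Proof. by elim: m => // m IH; rewrite contact_lineS. Qed.

End Zigzag.

Lemma open_intervals_meet (R : realFieldType) (c1 r1 c2 r2 : R) :
  0 < r1 -> 0 < r2 -> c1 - r1 < c2 + r2 -> c2 - r2 < c1 + r1 ->
  exists q, `|q - c1| < r1 /\ `|q - c2| < r2.
Proof.
move=> r1_gt0 r2_gt0 h1 h2.
case: (lerP (c1 - r1) (c2 - r2)) => l; case: (lerP (c1 + r1) (c2 + r2)) => u;
  [exists ((c2 - r2 + (c1 + r1)) / 2) | exists c2 | exists c1
  | exists ((c1 - r1 + (c2 + r2)) / 2)];
  by rewrite !ltr_distl; split; apply/andP; split; lra.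
Qed.

Section SquarePacking.
Variables (R : realType) (n : nat) (r x y : 'I_n -> R).

Lemma contact_y_overlap i j : contact r x y i j ->
  y i - r i <= y j + r j /\ y j - r j <= y i + r i.
Proof.
case=> _ [q [[_ qi] [_ qj]]]; move: qi qj.
by rewrite !ler_distl => /andP[? ?] /andP[? ?]; split; lra.
Qed.

Lemma packing_flush_y_disjoint i j : homothetic_packing r x y -> i != j ->
  x i + r i = x j + r j \/ x i - r i = x j - r j ->
  y i + r i <= y j - r j \/ y j + r j <= y i - r i.
Proof.
case=> r_gt0 disj ij flush.
have [|yij] := lerP (y i + r i) (y j - r j); first by left.
have [|yji] := lerP (y j + r j) (y i - r i); first by right.
have [qx [qxi qxj]] : exists q, `|q - x i| < r i /\ `|q - x j| < r j.
  by have := r_gt0 i; have := r_gt0 j; case: flush => ? ? ?; apply: open_intervals_meet; lra.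
have [qy [qyi qyj]] := open_intervals_meet (r_gt0 i) (r_gt0 j) yji yij.
by case: (disj i j ij (qx, qy)).
Qed.

Lemma weak_generic_balanced k (c : 'I_k -> 'I_n) (M1 M0 : {set 'I_k}) :
  weak_generic r -> injective c -> [disjoint M1 & M0] -> (4 <= #|~: (M1 :|: M0)|)%N ->
  \sum_(i in M1) r (c i) = \sum_(i in M0) r (c i) -> M1 = set0.
Proof.
move=> wg c_inj M10 zeros sums.
pose sigma v : int := if v \in c @: M1 then 1 else if v \in c @: M0 then -1 else 0.
have sigma0 := wg sigma; apply/setP => i; rewrite inE; apply/negP => iM1.
suff : sigma (c i) = 0 by rewrite /sigma mem_imset // iM1.
apply: sigma0 => [v | | ].
- by rewrite /sigma; case: ifP => _; [|case: ifP].
- apply: leq_trans zeros _; rewrite -(card_imset _ c_inj); apply: subset_leq_card.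
  apply/subsetP => _ /imsetP[j + ->]; rewrite !inE negb_or => /andP[jM1 jM0].
  by rewrite /sigma !mem_imset // (negbTE jM1) (negbTE jM0).
- have term v : (sigma v)%:~R * r v =
      (if v \in c @: M1 then r v else 0) - (if v \in c @: M0 then r v else 0).
    rewrite /sigma; case: ifPn => [vM1|_]; last by case: ifP; rewrite ?mulN1r ?mul0r; lra.
    have -> : (v \in c @: M0) = false.
      apply/negbTE; move: vM1 => /imsetP[j jM1 ->]; rewrite mem_imset //.
      by apply: contraTN jM1 => jM0; rewrite (disjointFl M10 jM0).
    by rewrite mul1r subr0.
  rewrite (eq_bigr _ (fun v _ => term v)) sumrB -!big_mkcond /=.
  by rewrite !big_imset ?sums ?subrr //; move=> ? ? _ _ /c_inj.
Qed.

End SquarePacking.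

Lemma inZp_mod p m : inZp (m %% p.+1) = inZp m :> 'I_p.+1.
Proof. by apply: val_inj; rewrite /= modn_mod. Qed.

Lemma ordS_inZp p m : ordS (inZp m : 'I_p.+1) = inZp m.+1.
Proof. by apply: val_inj; rewrite /= -addn1 modnDml addn1. Qed.

Lemma ord_pred_inZpS p m : ord_pred (inZp m.+1 : 'I_p.+1) = inZp m.
Proof. by rewrite -ordS_inZp ordSK. Qed.

Section CycleIntervals.
Variables (R : realType) (n k : nat) (r x y : 'I_n -> R) (c : 'I_k.+1 -> 'I_n).
Hypothesis packing : homothetic_packing r x y.
Hypothesis cycle : Ex_cycle r x y c.
Hypothesis not_monotone : forall i : 'I_k.+1,
  ~ (x (c (ord_pred i)) < x (c i) < x (c (ordS i))) /\
  ~ (x (c (ordS i)) < x (c i) < x (c (ord_pred i))).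

Definition cycle_x m := x (c (inZp m)).
Definition cycle_y m := y (c (inZp m)).
Definition cycle_r m := r (c (inZp m)).

Let cycle_r_gt0 m : 0 < cycle_r m. Proof. exact: packing.1. Qed.

Let cycle_edge m : Ex_edge r x y (c (inZp m)) (c (inZp m.+1)).
Proof. by have [_ [_ edge]] := cycle; rewrite -ordS_inZp; exact: edge. Qed.

Let cycle_step m : cycle_r m + cycle_r m.+1 = `|cycle_x m - cycle_x m.+1|.
Proof. by have [_ []] := cycle_edge m. Qed.

Let cycle_no_monotone m :
  ~ (cycle_x m < cycle_x m.+1 < cycle_x m.+2) /\ ~ (cycle_x m.+2 < cycle_x m.+1 < cycle_x m).
Proof. by have := not_monotone (inZp m.+1); rewrite ord_pred_inZpS ordS_inZp. Qed.

Lemma cycle_interval_cycle : interval_cycle k.+1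
  (fun m => cycle_y m - cycle_r m) (fun m => cycle_y m + cycle_r m) (rightward cycle_x).
Proof.
have inZpS_mod m : inZp (m %% k.+1).+1 = inZp m.+1 :> 'I_k.+1.
  by rewrite -!ordS_inZp inZp_mod.
have line m m' : rightward cycle_x m = rightward cycle_x m' ->
    cycle_x m + cycle_r m = cycle_x m' + cycle_r m' \/
    cycle_x m - cycle_r m = cycle_x m' - cycle_r m'.
  have := contact_line_const cycle_r_gt0 cycle_step cycle_no_monotone m.
  have := contact_line_const cycle_r_gt0 cycle_step cycle_no_monotone m'.
  by rewrite /contact_line => <- e tmm'; rewrite -tmm' in e; case: ifP e => _ e; [left|right].
split => [|m|m|m|m|m|m|m|m m' tmm' mm'].
- by case: cycle.
- by rewrite /cycle_y /cycle_r inZp_mod.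
- by rewrite /cycle_y /cycle_r inZp_mod.
- by rewrite /rightward /cycle_x inZp_mod inZpS_mod.
- by have := cycle_r_gt0 m; lra.
- exact: (rightwardS cycle_r_gt0 cycle_step cycle_no_monotone).
- by have [/contact_y_overlap [? _] _] := cycle_edge m.
- by have [/contact_y_overlap [_ ?] _] := cycle_edge m.
- apply: (packing_flush_y_disjoint packing); last exact: line.
  have [_ [c_inj _]] := cycle; rewrite (inj_eq c_inj).
  by apply: contra mm' => /eqP /(congr1 val) /= ->.
Qed.

Lemma cycle_common_corner : k.+1 = 4%N ->
  exists q, forall i : 'I_k.+1, is_corner r x y (c i) q.
Proof.
move=> k4; have IC : interval_cycle 4 (fun m => cycle_y m - cycle_r m)
    (fun m => cycle_y m + cycle_r m) (rightward cycle_x).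
  by rewrite -k4; exact: cycle_interval_cycle.
have [p hp] := interval_cycle4_common_endpoint IC.
exists (contact_line cycle_x cycle_r 0, p) => i; rewrite -[c i](congr1 c (valZpK i)).
split => /=.
  rewrite -(contact_line_const cycle_r_gt0 cycle_step cycle_no_monotone i) /contact_line.
  by case: ifP => _; [left|right].
by have [] := hp i; rewrite -?k4 ?ltn_ord // => <-; [left|right].
Qed.

End CycleIntervals.

Unset Implicit Arguments.

Theorem lemma16 (R : realType) (n : nat) (r x y : 'I_n -> R)
    (k : nat) (c : 'I_k -> 'I_n) :
  (6 <= n)%N ->
  homothetic_packing r x y ->
  weak_generic r ->
  Ex_cycle r x y c ->
  (forall i : 'I_k,
      ~ (x (c (ord_pred i)) < x (c i) < x (c (ordS i))) /\
      ~ (x (c (ordS i)) < x (c i) < x (c (ord_pred i)))) ->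
  k = 4%N /\ exists q : R * R, forall i : 'I_k, is_corner r x y (c i) q.
Proof.
move=> _ packing wg cycle not_monotone.
case: k c cycle not_monotone => [c [] //|k c cycle not_monotone].
have IC := cycle_interval_cycle packing cycle not_monotone.
have [k_le4|k_gt4] := leqP k.+1 4.
  have k4 : k.+1 = 4%N.
    have := interval_cycle_even IC; have := ic_k_gt2 IC.
    by case: k {c cycle not_monotone IC} k_le4 => [|[|[|[|]]]].
  by split => //; exact: cycle_common_corner packing cycle not_monotone k4.
have [M1 [M0 [M10 M1_ne0 zeros sums]]] := interval_cycle_balanced IC k_gt4.
case/eqP: M1_ne0; apply: (weak_generic_balanced wg cycle.2.1 M10 zeros).
have len (i : 'I_k.+1) : cycle_y y c i + cycle_r r c i - (cycle_y y c i - cycle_r r c i) =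
    2 * r (c i) by rewrite /cycle_r valZpK; lra.
move: sums; rewrite !(eq_bigr _ (fun i _ => len i)) -!mulr_sumr.
by move/mulfI; apply; rewrite pnatr_eq0.
Qed.
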